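(* Let $\Gamma\vdash t:A$ be derivable in the simply typed distributive $\lambda$-calculus. Then: (1) if $t=x$, then $\Gamma=\Gamma',x:B$ for some $\Gamma'$ and $B$ with $B\equiv A$; (2) if $t=\lambda x.s$, then $\Gamma,x:B\vdash s:C$ for some $B,C$ with $B\Rightarrow C\equiv A$; (3) if $t=\langle s_1,s_2\rangle$, then $\Gamma\vdash s_i:B_i$ for $i=1,2$, for some $B_1,B_2$ with $B_1\wedge B_2\equiv A$; (4) if $t=su$, then for some $B$, $\Gamma\vdash s:B\Rightarrow A$ and $\Gamma\vdash u:B$; (5) if $t=\pi_i s$, then $\Gamma\vdash s:B_1\wedge B_2$ for some $B_1,B_2$ with $B_i=A$.
   Context: Terms: $t,s,u ::= x \mid \lambda x.t \mid ts \mid \langle t,s\rangle \mid \pi_1 t \mid \pi_2 t$ (up to $\alpha$-renaming). Types: $A ::= \tau \mid A\Rightarrow A \mid A\wedge A$ with $\tau$ a single atomic type; $A\Rightarrow B\wedge C$ means $A\Rightarrow(B\wedge C)$. The relation $\equiv$ on types is the smallest equivalence relation (reflexive, symmetric, transitive) that contains $A\Rightarrow (B\wedge C)\equiv (A\Rightarrow B)\wedge(A\Rightarrow C)$ for all $A,B,C$, and is a congruence: $A\equiv C$ implies $A\Rightarrow B\equiv C\Rightarrow B$ and $A\wedge B\equiv C\wedge B$; $B\equiv C$ implies $A\Rightarrow B\equiv A\Rightarrow C$ and $A\wedge B\equiv A\wedge C$. Typing contexts $\Gamma$ are finite assignments of types to variables. Typing rules: $\Gamma,x:A\vdash x:A$;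 if $\Gamma\vdash t:A$ and $A\equiv B$ then $\Gamma\vdash t:B$; if $\Gamma,x:A\vdash t:B$ then $\Gamma\vdash \lambda x.t:A\Rightarrow B$; if $\Gamma\vdash t:A\Rightarrow B$ and $\Gamma\vdash s:A$ then $\Gamma\vdash ts:B$; if $\Gamma\vdash t:A$ and $\Gamma\vdash s:B$ then $\Gamma\vdash\langle t,s\rangle:A\wedge B$; if $\Gamma\vdash t:A\wedge B$ then $\Gamma\vdash\pi_1 t:A$ and $\Gamma\vdash \pi_2 t:B$. *)

(* Terms are in de Bruijn form (terms up to alpha-renaming); a typing
   context is a finite list of types, the variable with index n having
   type nth_error Gamma n, and "Gamma, x:A" is A :: Gamma. *)
From Stdlib Require Import List.
Import ListNotations.

Inductive term : Type :=
  | Var : nat -> term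
  | Lam : term -> term
  | App : term -> term -> term
  | Pair : term -> term -> term
  | Proj1 : term -> term
  | Proj2 : term -> term.

Inductive typ : Type :=
  | Tau : typ
  | Arr : typ -> typ -> typ
  | Conj : typ -> typ -> typ.

Inductive teq : typ -> typ -> Prop :=
  | teq_refl : forall A, teq A A
  | teq_sym : forall A B, teq A B -> teq B A
  | teq_trans : forall A B C, teq A B -> teq B C -> teq A C
  | teq_distr : forall A B C, teq (Arr A (Conj B C)) (Conj (Arr A B) (Arr A C))
  | teq_arr_l : forall A B C, teq A C -> teq (Arr A B) (Arr C B)
  | teq_conj_l : forall A B C, teq A C -> teq (Conj A B) (Conj C B)
  | teq_arr_r : forall A B C, teq B C -> teq (Arr A B) (Arr A C)
  | teq_conj_r : forall A B C, teq B C -> teq (Conj A B) (Conj A C).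

Definition ctx := list typ.

Inductive typing : ctx -> term -> typ -> Prop :=
  | ty_var : forall G n A, nth_error G n = Some A -> typing G (Var n) A
  | ty_equiv : forall G t A B, typing G t A -> teq A B -> typing G t B
  | ty_lam : forall G t A B, typing (A :: G) t B -> typing G (Lam t) (Arr A B)
  | ty_app : forall G t s A B, typing G t (Arr A B) -> typing G s A -> typing G (App t s) B
  | ty_pair : forall G t s A B, typing G t A -> typing G s B -> typing G (Pair t s) (Conj A B)
  | ty_proj1 : forall G t A B, typing G t (Conj A B) -> typing G (Proj1 t) A
  | ty_proj2 : forall G t A B, typing G t (Conj A B) -> typing G (Proj2 t) B.

(* Every typing rule except the equivalence rule is syntax-directed, so a
   derivation of [G |- t : A] ends with the rule for the head of [t] followed
   by a chain of equivalence steps.  For variables, abstractions and pairs the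
   chain collapses into one [teq] by transitivity; for applications and
   projections it is pushed into the type of the premise by congruence of
   [teq], which is why those cases need no equivalence in their conclusion. *)
From Stdlib Require Import List.

Lemma typing_var_inv G n A :
  typing G (Var n) A -> exists B, nth_error G n = Some B /\ teq B A.
Proof.
  intros H. remember (Var n) as t eqn:Et. revert n Et.
  induction H; intros m Et; try discriminate.
  - injection Et as <-. exists A. split; [assumption | apply teq_refl].
  - destruct (IHtyping m Et) as (B' & HB' & Heq).
    exists B'. split; [assumption | eapply teq_trans; eassumption].
Qed.

Lemma typing_lam_inv G s A :
  typing G (Lam s) A -> exists B C, typing (B :: G) s C /\ teq (Arr B C) A.
Proof.
  intros H. remember (Lam s) as t eqn:Et. revert s Et.
  induction H; intros s' Et; try discriminate.
  - destruct (IHtyping s' Et) as (B' & C' & Hs & Heq).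
    exists B', C'. split; [assumption | eapply teq_trans; eassumption].
  - injection Et as <-. exists A, B. split; [assumption | apply teq_refl].
Qed.

Lemma typing_pair_inv G s1 s2 A :
  typing G (Pair s1 s2) A ->
  exists B1 B2, typing G s1 B1 /\ typing G s2 B2 /\ teq (Conj B1 B2) A.
Proof.
  intros H. remember (Pair s1 s2) as t eqn:Et. revert s1 s2 Et.
  induction H; intros s1 s2 Et; try discriminate.
  - destruct (IHtyping s1 s2 Et) as (B1 & B2 & H1 & H2 & Heq).
    exists B1, B2. repeat split; try assumption. eapply teq_trans; eassumption.
  - injection Et as <- <-. exists A, B. repeat split; try assumption.
    apply teq_refl.
Qed.

Lemma typing_app_inv G s u A :
  typing G (App s u) A -> exists B, typing G s (Arr B A) /\ typing G u B.
Proof.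
  intros H. remember (App s u) as t eqn:Et. revert s u Et.
  induction H; intros s' u Et; try discriminate.
  - destruct (IHtyping s' u Et) as (B' & Hs & Hu).
    exists B'. split; [| assumption].
    apply ty_equiv with (Arr B' A); [assumption | apply teq_arr_r; assumption].
  - injection Et as <- <-. exists A. split; assumption.
Qed.

Lemma typing_proj1_inv G s A :
  typing G (Proj1 s) A -> exists B, typing G s (Conj A B).
Proof.
  intros H. remember (Proj1 s) as t eqn:Et. revert s Et.
  induction H; intros s' Et; try discriminate.
  - destruct (IHtyping s' Et) as (C & Hs).
    exists C. apply ty_equiv with (Conj A C);
      [assumption | apply teq_conj_l; assumption].
  - injection Et as <-. exists B. assumption.
Qed.

Lemma typing_proj2_inv G s B :
  typing G (Proj2 s) B -> exists A, typing G s (Conj A B).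
Proof.
  intros H. remember (Proj2 s) as t eqn:Et. revert s Et.
  induction H; intros s' Et; try discriminate.
  - destruct (IHtyping s' Et) as (C & Hs).
    exists C. apply ty_equiv with (Conj C A);
      [assumption | apply teq_conj_r; assumption].
  - injection Et as <-. exists A. assumption.
Qed.

Theorem lemma2 :
  (forall G n A, typing G (Var n) A ->
     exists B, nth_error G n = Some B /\ teq B A) /\
  (forall G s A, typing G (Lam s) A ->
     exists B C, typing (B :: G) s C /\ teq (Arr B C) A) /\
  (forall G s1 s2 A, typing G (Pair s1 s2) A ->
     exists B1 B2, typing G s1 B1 /\ typing G s2 B2 /\ teq (Conj B1 B2) A) /\
  (forall G s u A, typing G (App s u) A ->
     exists B, typing G s (Arr B A) /\ typing G u B) /\
  (forall G s A, typing G (Proj1 s) A ->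
     exists B1 B2, typing G s (Conj B1 B2) /\ B1 = A) /\
  (forall G s A, typing G (Proj2 s) A ->
     exists B1 B2, typing G s (Conj B1 B2) /\ B2 = A).
Proof.
  split; [exact typing_var_inv |].
  split; [exact typing_lam_inv |].
  split; [exact typing_pair_inv |].
  split; [exact typing_app_inv |].
  split.
  - intros G s A H. destruct (typing_proj1_inv G s A H) as (B & Hs). eauto.
  - intros G s B H. destruct (typing_proj2_inv G s B H) as (A & Hs). eauto.
Qed.
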